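(* Let $\beta=\frac{1}{16}$, let $S$ be a string of length $n$, let $d\ge1$, and let $1\le x<y\le n$ with $y-x+1$ even. Let $p_1,\dots,p_{2\log n}$ be primes chosen independently and uniformly at random from the primes in $\left[\frac{d}{\beta}\log^2 n,\frac{34d}{\beta}\log^2 n\right]$. Then: (1) If $\mathsf{HAM}(S[x,y],S[x,y]^R)\le d$, then $\Delta(x,y)\le d$. (2) If $\mathsf{HAM}(S[x,y],S[x,y]^R)\ge 2d$, then $\Delta(x,y)>(1+\beta)d$ with probability at least $1-\frac{1}{n^3}$.
   Context: $S[x,y]=S[x]S[x+1]\cdots S[y]$; for a string $T$ of length $m$, $T^R$ is its reverse and $\mathsf{HAM}(T,T^R)=|\{i: T[i]\neq T[m+1-i]\}|$. A position $i\in[x,y]$ is a mismatch of $S[x,y]$ if $S[i]\neq S[x+y-i]$ (so $\mathsf{HAM}(S[x,y],S[x,y]^R)$ is the number of mismatch positions). For each $j$, $\Delta_j(x,y)$ is the number of residues $r\in\{0,1,\dots,p_j-1\}$ such that the first-level subpattern of $S[x,y]$ at positions $\equiv r\pmod{p_j}$ differs from its mirrored counterpart, i.e. such that there is a mismatch position $i\in[x,y]$ with $i\equiv r \pmod{p_j}$. $\Delta(x,y)=\max_j\Delta_j(x,y)$. $\log$ is base 2. *)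

From Stdlib Require Import Reals.
From mathcomp Require Import all_boot.
Set Implicit Arguments. Unset Strict Implicit. Unset Printing Implicit Defensive.

(* A string of length n is S : nat -> T, read at positions 1..n only. *)

Definition mismatch (T : eqType) (S : nat -> T) (x y i : nat) : bool :=
  (x <= i <= y) && (S i != S (x + y - i)).

Definition HAM_rev (T : eqType) (S : nat -> T) (x y : nat) : nat :=
  count (mismatch S x y) (iota x (y - x + 1)).

Definition Delta_p (T : eqType) (S : nat -> T) (x y p : nat) : nat :=
  count (fun r => has (fun i => mismatch S x y i && (i %% p == r))
                      (iota x (y - x + 1)))
        (iota 0 p).

Definition Delta (T : eqType) (S : nat -> T) (x y k : nat) (ps : 'I_k -> nat)
  : nat := \max_(j < k) Delta_p S x y (ps j).

Definition log2R (n : nat) : R := Rdiv (ln (INR n)) (ln 2).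

(* p lies in [ (d/beta) log^2 n , (34 d/beta) log^2 n ] with beta = 1/16 *)
Definition in_range (d n p : nat) : bool :=
  (if Rle_dec (Rmult (Rmult 16 (INR d)) (pow (log2R n) 2)) (INR p) then true else false) &&
  (if Rle_dec (INR p) (Rmult (Rmult 544 (INR d)) (pow (log2R n) 2)) then true else false).

(* number of primes: ceil(2 log2 n) = least k with n^2 <= 2^k *)
Definition num_primes (n : nat) : nat := up_log 2 (n ^ 2).

(* a nat bound strictly above every element of the prime interval
   (since log2 n <= up_log 2 n) *)
Definition prime_bound (d n : nat) : nat := 544 * d * (up_log 2 n) ^ 2 + 1.

(* the sample space: num_primes n primes, each from the primes in the range *)
Definition valid_choice (d n : nat)
  (f : {ffun 'I_(num_primes n) -> 'I_(prime_bound d n)}) : bool :=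
  [forall j, prime (f j) && in_range d n (f j)].

Arguments valid_choice d n f : clear implicits.

(* Part (1): every residue class counted by Delta_j contains a mismatch, so
   Delta_j <= HAM.  Part (2): fix 2d mismatch positions.  A prime q in the
   range with Delta_q <= (1 + 1/16) d sorts them into at most 17d/16 residue
   classes, hence at least 15d/16 pairs a < b of them satisfy q | b - a.
   Since distinct primes dividing b - a < n multiply to at most n, the
   product of q ^ (number of such pairs) over all these bad primes is at most
   n ^ (4 d^2); as each q >= 16 d log^2 n, there are at most
   (64/150) d (log n + 1) bad primes.  A Chebyshev estimate based on the
   central binomial coefficient gives at least 2 d (log n + 1) primes in the
   range, so at most a quarter of them are bad, and the probability that all
   2 log n independently chosen primes are bad is at most 4 ^ (-2 log n),
   which is below n ^ -3. *)

From Stdlib Require Import Reals Lra Psatz.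
From mathcomp Require Import all_boot zify.

Set Implicit Arguments. Unset Strict Implicit. Unset Printing Implicit Defensive.

Lemma leq_exp2rW a b e : a <= b -> a ^ e <= b ^ e.
Proof. by move=> le_ab; elim: e => // e IH; rewrite !expnS leq_mul. Qed.

Lemma prod_nat_const_seq (s : seq nat) (P : pred nat) c :
  \prod_(i <- s | P i) c = c ^ count P s.
Proof. by rewrite big_const_seq iter_muln_1. Qed.

Lemma sum_nat_indicator_leq N e : \sum_(1 <= k < N) (k <= e) = minn N.-1 e.
Proof.
elim: N => [|[|N] IH]; try by rewrite big_geq //; lia.
by rewrite big_nat_recr //= IH /=; case: leqP => ?; lia.
Qed.

Lemma card_ord_pred N (P : pred nat) : #|[pred i : 'I_N | P i]| = count P (iota 0 N).
Proof.
rewrite -sum1_card (eq_bigl (fun i : 'I_N => P i)) //.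
by rewrite -(big_mkord P (fun=> 1)) sum1_count /index_iota subn0.
Qed.

Lemma count_iota_le (P : pred nat) m k N : m + k <= N ->
  count P (iota m k) <= count P (iota 0 N).
Proof.
move=> le_N; rewrite -(subnKC le_N) !iotaD !count_cat !add0n; lia.
Qed.

Lemma leq_mul_bigmax (I : finType) (F : I -> nat) a c :
  (a * \max_i F i <= c) = [forall i, a * F i <= c].
Proof.
rewrite (big_morph (muln a) (maxnMr a) (muln0 a)).
by apply/bigmax_leqP/forallP => [le_F i | le_F i _]; [exact: le_F | exact: le_F].
Qed.

Section Log2Bounds.
Local Open Scope R_scope.

Lemma INR_expn (m k : nat) : INR (m ^ k)%N = INR m ^ k.
Proof. by elim: k => [|k IH] //=; rewrite expnS mult_INR IH. Qed.

Lemma log2R_bounds (n t : nat) : (2 ^ t <= n < 2 ^ t.+1)%N ->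
  INR t <= log2R n < INR t + 1.
Proof.
move=> /andP[lo hi].
have {}lo : 2 ^ t <= INR n by rewrite -[2]/(INR 2) -INR_expn; apply/le_INR/leP.
have {}hi : INR n < 2 ^ t.+1 by rewrite -[2]/(INR 2) -INR_expn; apply/lt_INR/ltP.
have ln2_gt0 : 0 < ln 2 by have := ln_lt_2; lra.
have pow_gt0 : 0 < 2 ^ t by apply: pow_lt; lra.
have ln_lo : INR t * ln 2 <= ln (INR n).
  rewrite -ln_pow; last lra.
  case: (Rle_lt_or_eq_dec _ _ lo) => [lt|->]; [left; exact: ln_increasing | by right].
have ln_hi : ln (INR n) < (INR t + 1) * ln 2.
  by rewrite -S_INR -ln_pow; [apply: ln_increasing; lra | lra].
rewrite /log2R /Rdiv; split.
- by apply: (Rmult_le_reg_r (ln 2)) => //; rewrite Rmult_assoc Rinv_l; lra.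
- by apply: (Rmult_lt_reg_r (ln 2)) => //; rewrite Rmult_assoc Rinv_l; lra.
Qed.

Lemma in_range_lb d n t p : (2 ^ t <= n < 2 ^ t.+1)%N ->
  in_range d n p -> (16 * d * (t * t) <= p)%N.
Proof.
move=> /log2R_bounds [lo _]; rewrite /in_range; case: Rle_dec => // H _.
apply/leP/INR_le; rewrite !mult_INR (INR_IZR_INZ 16); change (Z.of_nat 16) with 16%Z.
have sq : INR t * INR t <= log2R n ^ 2 by have := pos_INR t; nra.
have := Rmult_le_compat_l _ _ _ (pos_INR d) sq; lra.
Qed.

Lemma in_range_window d n t p : (2 ^ t <= n < 2 ^ t.+1)%N -> (10 <= t)%N ->
  (16 * d * (t.+1 * t.+1) <= p <= 384 * d * (t.+1 * t.+1))%N -> in_range d n p.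
Proof.
move=> /log2R_bounds [lo hi] t_ge10 /andP[p_lo p_hi].
have {}p_hi : (p <= 544 * d * (t * t))%N by apply: leq_trans p_hi _; nia.
move/leP/le_INR: p_lo; move/leP/le_INR: p_hi.
rewrite !mult_INR (INR_IZR_INZ 544) (INR_IZR_INZ 16) !S_INR => p_hi p_lo.
change (Z.of_nat 544) with 544%Z in p_hi; change (Z.of_nat 16) with 16%Z in p_lo.
have t_ge0 := pos_INR t; have d_ge0 := pos_INR d.
have sq_lo : INR t * INR t <= log2R n ^ 2 by nra.
have sq_hi : log2R n ^ 2 <= (INR t + 1) * (INR t + 1) by nra.
have lo_ok : 16 * INR d * log2R n ^ 2 <= INR p.
  by have := Rmult_le_compat_l _ _ _ d_ge0 sq_hi; nra.
have hi_ok : INR p <= 544 * INR d * log2R n ^ 2.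
  by have := Rmult_le_compat_l _ _ _ d_ge0 sq_lo; nra.
rewrite /in_range; case: Rle_dec => [{}lo_ok|nlo]; last by case: (nlo lo_ok).
by case: Rle_dec => // nhi; case: (nhi hi_ok).
Qed.

End Log2Bounds.

Lemma prod_pfactor_logn N X : 0 < N ->
  (forall p, prime p -> X <= p -> logn p N = 0) ->
  \prod_(0 <= p < X | prime p) p ^ logn p N = N.
Proof.
move=> N_gt0 logn_large.
have pow_logn1 p : X <= p -> p ^ logn p N = 1.
  case: (boolP (prime p)) => [pr_p /(logn_large p pr_p) -> //|/negPf np _].
  by rewrite lognE np.
rewrite -[RHS](partnT N_gt0) (widen_partn _ (leq_maxl N X)).
rewrite [RHS](@big_cat_nat _ _ _ X) //=; last exact: leq_trans (leq_maxr N X) (leqnSn _).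
rewrite [X in _ = _ * X]big1_seq ?muln1 => [|p /andP[_]]; last first.
  by rewrite mem_index_iota => /andP[/pow_logn1].
rewrite big_mkcond [RHS]big_mkcond; apply: eq_bigr => p _ /=.
by case: (boolP (prime p)) => // /negPf np; rewrite lognE np.
Qed.

Lemma binm_central_ge m : 2 ^ m <= 'C(m.*2, m).
Proof.
elim: m => [|k IH] //; rewrite doubleS expnS binS.
have le1 : 'C(k.*2, k) <= 'C(k.*2.+1, k.+1) by rewrite binS leq_addl.
have le2 : 'C(k.*2, k) <= 'C(k.*2.+1, k) by case: k {IH le1} => // k; rewrite binS leq_addr.
lia.
Qed.

Lemma binm_central_le m : 'C(m.*2, m) <= 4 ^ m.
Proof.
have -> : 4 ^ m = (1 + 1) ^ m.*2 by rewrite -mul2n expnM.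
have m_lt : m < m.*2.+1 by rewrite ltnS -addnn leq_addr.
by rewrite expnDn (bigD1 (Ordinal m_lt)) //= !exp1n !muln1 leq_addr.
Qed.

Lemma logn_binm_central m p : prime p ->
  logn p 'C(m.*2, m) + (logn p m`!).*2 = logn p (m.*2)`!.
Proof.
move=> pr_p; have m_le : m <= m.*2 by rewrite -addnn leq_addl.
have := bin_fact m_le; rewrite -addnn addnK => <-.
by rewrite !lognM ?muln_gt0 ?bin_gt0 ?fact_gt0 ?leq_addl // -addnn.
Qed.

(* Legendre's formula: the valuation is the sum over k >= 1 of
   (2m) %/ p^k - 2 (m %/ p^k), each term being 0 or 1, and 0 once p^k > 2m. *)
Lemma pfactor_binm_central_le p m : prime p -> 0 < m ->
  p ^ logn p 'C(m.*2, m) <= m.*2.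
Proof.
move=> pr_p m_gt0; have p_gt1 := prime_gt1 pr_p.
set e := trunc_log p m.*2.
have pe_le : p ^ e <= m.*2 by apply: trunc_logP; lia.
have lt_pe1 : m.*2 < p ^ e.+1 by apply: trunc_log_ltn.
have e_le : e <= m.*2 by apply: leq_trans (ltnW (ltn_expl e p_gt1)) pe_le.
apply: leq_trans pe_le; apply: leq_pexp2l; first lia.
have := logn_binm_central m pr_p; rewrite !logn_fact //.
have -> : \sum_(1 <= k < m.+1) m %/ p ^ k = \sum_(1 <= k < m.*2.+1) m %/ p ^ k.
  rewrite [RHS](@big_cat_nat _ _ _ m.+1) //=; last lia.
  rewrite [X in _ = _ + X]big1_seq ?addn0 // => k /andP[_].
  rewrite mem_index_iota => /andP[k_gt _]; apply: divn_small.
  by apply: leq_trans (ltn_expl k p_gt1); lia.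
have digit k : m.*2 %/ p ^ k <= 2 * (m %/ p ^ k) + (k <= e).
  have pk_gt0 : 0 < p ^ k by rewrite expn_gt0; lia.
  case: (leqP k e) => [_|k_gt] /=.
    rewrite addn1 -ltnS ltn_divLR //.
    by have := ltn_ceil m pk_gt0; move: (m %/ p ^ k) (p ^ k) => a q; nia.
  by rewrite divn_small //; apply: leq_trans lt_pe1 _; apply: leq_pexp2l; lia.
have : \sum_(1 <= k < m.*2.+1) m.*2 %/ p ^ k
       <= \sum_(1 <= k < m.*2.+1) (2 * (m %/ p ^ k) + (k <= e)).
  by apply: leq_sum => k _; exact: digit.
rewrite big_split /= -big_distrr /= sum_nat_indicator_leq /=.
set s := \sum_(_ <= _ < _) _; set s' := \sum_(_ <= _ < _) _; lia.
Qed.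

Lemma binm_central_factor m : 0 < m ->
  \prod_(0 <= p < m.*2.+1 | prime p) p ^ logn p 'C(m.*2, m) = 'C(m.*2, m).
Proof.
move=> m_gt0; apply: prod_pfactor_logn; first by rewrite bin_gt0 -addnn leq_addl.
move=> p pr_p lt_p; have := pfactor_binm_central_le pr_p m_gt0.
case: (logn p _) => // k; rewrite expnS.
have : 0 < p ^ k by rewrite expn_gt0 prime_gt0.
nia.
Qed.

Lemma logn_binm_central_gt0 p m : prime p -> m < p <= m.*2 ->
  0 < logn p 'C(m.*2, m).
Proof.
move=> pr_p /andP[lt_mp le_p].
have : logn p m`! = 0.
  rewrite logn_fact // big1_seq // => k /andP[_].
  rewrite mem_index_iota => /andP[k_gt0 _]; apply: divn_small.
  apply: leq_trans lt_mp _; rewrite -{1}(expn1 p).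
  exact: leq_pexp2l (prime_gt0 pr_p) k_gt0.
have : 0 < logn p (m.*2)`!.
  by rewrite logn_gt0 mem_primes pr_p fact_gt0 dvdn_fact // prime_gt0.
have := logn_binm_central m pr_p; lia.
Qed.

Definition primorial N := \prod_(0 <= p < N | prime p) p.

Lemma primorial_gt0 N : 0 < primorial N.
Proof. by apply: prodn_cond_gt0 => p; exact: prime_gt0. Qed.

Lemma primorialD M N : M <= N ->
  primorial N = primorial M * \prod_(M <= p < N | prime p) p.
Proof. by move=> le_MN; rewrite /primorial (@big_cat_nat _ _ _ M). Qed.

Lemma primorial_mono : {homo primorial : M N / M <= N}.
Proof.
move=> M N le_MN; rewrite (primorialD le_MN) leq_pmulr //.
by apply: prodn_cond_gt0 => p; exact: prime_gt0.
Qed.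

(* The primes in (m, 2m] all divide 'C(2m, m), which is at most 4^m. *)
Lemma primorial_double m : 0 < m -> primorial m.*2.+1 <= primorial m.+1 * 4 ^ m.
Proof.
move=> m_gt0; have le_m : m.+1 <= m.*2.+1 by rewrite ltnS -addnn leq_addl.
rewrite (primorialD le_m) leq_mul2l; apply/orP; right.
apply: leq_trans (binm_central_le m).
rewrite -(binm_central_factor m_gt0) [X in _ <= X](@big_cat_nat _ _ _ m.+1) //=.
set A := \prod_(0 <= p < m.+1 | _) _.
have A_gt0 : 0 < A by apply: prodn_cond_gt0 => p pr_p; rewrite expn_gt0 prime_gt0.
apply: leq_trans (leq_pmull _ A_gt0).
rewrite big_nat_cond [X in _ <= X]big_nat_cond; apply: leq_prod => p.
case/andP=> /andP[lt_mp le_p] pr_p; rewrite -{1}(expn1 p).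
by apply: leq_pexp2l (prime_gt0 pr_p) (logn_binm_central_gt0 pr_p _); lia.
Qed.

Lemma primorial_le N : primorial N <= 4 ^ N.*2.
Proof.
elim/ltn_ind: N => N IH.
case: (leqP N 3) => [le_N3|lt_3N].
  by case: N le_N3 {IH} => [|[|[|[|]]]]; rewrite /primorial unlock.
set m := N./2.
have le_N : N <= m.*2.+1 by rewrite /m -[N in N <= _]odd_double_half; case: odd.
apply: leq_trans (primorial_mono le_N) _.
apply: leq_trans (primorial_double (_ : 0 < m)) _; first by rewrite /m; lia.
apply: leq_trans (leq_mul (IH m.+1 _) (leqnn _)) _; first by rewrite /m; lia.
by rewrite -expnD leq_pexp2l //; rewrite /m; lia.
Qed.

(* Split the factorisation of 'C(2m, m) at r and at A: every prime power
   factor is at most 2m, and a prime p >= r, having p ^ 2 > 2m, divides it at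
   most once, so the factors with r <= p < A are bounded by the primorial. *)
Lemma exp2_le_count_primes m A r : 0 < m -> r <= A -> A <= m.*2 -> m.*2 < r * r ->
  2 ^ m <= m.*2 ^ r * 4 ^ A.*2 * m.*2 ^ count prime (index_iota A m.*2.+1).
Proof.
move=> m_gt0 le_rA le_Am lt_r2.
have pfactor_le p : prime p -> p ^ logn p 'C(m.*2, m) <= m.*2.
  by move=> pr_p; exact: pfactor_binm_central_le.
have prod_le a b : \prod_(a <= p < b | prime p) p ^ logn p 'C(m.*2, m)
                   <= m.*2 ^ count prime (index_iota a b).
  by rewrite -prod_nat_const_seq; apply: leq_prod => p /pfactor_le.
apply: leq_trans (binm_central_ge m) _; rewrite -(binm_central_factor m_gt0).
rewrite (@big_cat_nat _ _ _ A) //=; last lia.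
rewrite [\prod_(0 <= i < A | _) _](@big_cat_nat _ _ _ r) //=.
apply: leq_mul; first apply: leq_mul.
- apply: leq_trans (prod_le 0 r) _; apply: leq_pexp2l; first lia.
  by have := count_size prime (index_iota 0 r); rewrite size_iota subn0.
- apply: leq_trans (primorial_le A); rewrite (primorialD le_rA).
  apply: leq_trans (leq_pmull _ (primorial_gt0 r)).
  rewrite big_nat_cond [X in _ <= X]big_nat_cond; apply: leq_prod => p.
  case/andP=> /andP[le_rp _] pr_p; have := pfactor_le p pr_p.
  case: (logn p _) => [|[|k]] le_pk; rewrite ?expn0 ?expn1 ?(prime_gt0 pr_p) //.
  have : p * p <= p ^ k.+2 by rewrite !expnS mulnA leq_pmulr ?expn_gt0 ?prime_gt0.
  have : r * r <= p * p by exact: leq_mul.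
  lia.
- exact: prod_le.
Qed.

Lemma sq_le_exp2 t : 10 <= t -> 384 * (t.+1 * t.+1) <= 2 ^ t.*2.
Proof.
elim: t => // t IH; rewrite leq_eqVlt => /orP[/eqP <- //|lt_10t].
by have := IH lt_10t; rewrite doubleS !expnS; lia.
Qed.

(* With m = 12 A and r = 22 d (t + 1), where A = 16 d (t + 1)^2, fewer than
   2 d (t + 1) primes in [A, 24 A] would make the right-hand side of
   [exp2_le_count_primes] smaller than 2 ^ (12 A). *)
Lemma count_primes_window d t : 10 <= t -> 0 < d -> d < 2 ^ t ->
  2 * d * t.+1 <= count prime (index_iota (16 * d * (t.+1 * t.+1))
                                          (24 * (16 * d * (t.+1 * t.+1))).+1).
Proof.
move=> t_ge10 d_gt0 lt_d2t.
have -> : 16 * d * (t.+1 * t.+1) = 16 * (d * t.+1 * t.+1) by rewrite !mulnA.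
rewrite -mulnA; set D := d * t.+1.
set A := 16 * (D * t.+1); set K := count prime _.
have D_ge : t.+1 <= D by rewrite /D leq_pmull.
have le_A : 24 * A <= 2 ^ (t * 3).
  rewrite mulnS expnD muln2 (_ : 24 * A = d * (384 * (t.+1 * t.+1))); last lia.
  by apply: leq_mul; [exact: ltnW | exact: sq_le_exp2].
rewrite leqNgt; apply/negP => lt_K.
have le_rA : 22 * D <= A.
  by rewrite /A mulnCA [22 * D]mulnC leq_mul2l; apply/orP; right; lia.
have lt_r2 : (12 * A).*2 < 22 * D * (22 * D).
  have : D * t.+1 <= D * D by rewrite leq_mul2l D_ge orbT.
  rewrite /A; lia.
have m_gt0 : 0 < 12 * A by rewrite /A; lia.
have le_A2m : A <= (12 * A).*2 by lia.
have := exp2_le_count_primes m_gt0 le_rA le_A2m lt_r2.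
rewrite (_ : (12 * A).*2 = 24 * A) -/K => [bound|]; last lia.
have {bound} : 2 ^ (12 * A) <= 2 ^ (t * 3 * (22 * D)) * 2 ^ (4 * A) * 2 ^ (t * 3 * K).
  have e4 : 4 ^ (A.*2) = 2 ^ (4 * A) by rewrite -(expnM 2 2) -mul2n mulnA.
  rewrite !(expnM 2 (t * 3)) -e4; apply: leq_trans bound _.
  by apply: leq_mul; [apply: leq_mul|]; apply: leq_exp2rW.
rewrite -!expnD leq_exp2l // => le_exp.
have : t * K <= t * (2 * D) by rewrite leq_mul2l ltnW ?orbT.
rewrite /A in le_exp; lia.
Qed.

Section Mismatches.
Variables (T : eqType) (S : nat -> T) (x y : nat).

Definition mismatches : seq nat := [seq i <- iota x (y - x + 1) | mismatch S x y i].

Lemma HAM_revE : HAM_rev S x y = size mismatches.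
Proof. by rewrite size_filter. Qed.

Lemma sorted_mismatches : sorted ltn mismatches.
Proof. by apply: sorted_filter; [exact: ltn_trans | exact: iota_ltn_sorted]. Qed.

Lemma mem_mismatches i : i \in mismatches -> x <= i <= y.
Proof. by rewrite mem_filter => /andP[/andP[]]. Qed.

Lemma Delta_p_le_HAM_rev p : Delta_p S x y p <= HAM_rev S x y.
Proof.
rewrite /Delta_p -size_filter HAM_revE -(size_map (modn^~ p)).
apply: uniq_leq_size; first by rewrite filter_uniq // iota_uniq.
move=> r; rewrite mem_filter => /andP[/hasP[i i_in /andP[mis_i /eqP <-]] _].
by apply/mapP; exists i; rewrite // mem_filter mis_i.
Qed.

Lemma residues_le_Delta_p p s : 0 < p -> {subset s <= mismatches} ->
  size (undup [seq i %% p | i <- s]) <= Delta_p S x y p.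
Proof.
move=> p_gt0 sub_s; rewrite /Delta_p -size_filter.
apply: uniq_leq_size; first exact: undup_uniq.
move=> r; rewrite mem_undup => /mapP[i /sub_s i_mis ->].
rewrite mem_filter mem_iota leq0n add0n ltn_pmod // !andbT.
move: i_mis; rewrite mem_filter => /andP[mis_i i_in].
by apply/hasP; exists i; rewrite // mis_i eqxx.
Qed.

End Mismatches.

Fixpoint collisions (p : nat) (s : seq nat) : nat :=
  if s is a :: s' then count (fun b => p %| b - a) s' + collisions p s' else 0.

Lemma size_le_residues_collisions p s : sorted ltn s ->
  size s <= size (undup [seq i %% p | i <- s]) + collisions p s.
Proof.
elim: s => [|a s IH] //= sorted_as.
have sorted_s := path_sorted sorted_as.
have lt_as := order_path_min ltn_trans sorted_as.
have := IH sorted_s; case: ifP => [/mapP[b b_in eq_ab] | _] /=; last lia.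
have : 0 < count (fun b => p %| b - a) s.
  rewrite -has_count; apply/hasP; exists b => //.
  by rewrite -eqn_mod_dvd ?eq_ab // ltnW // (allP lt_as).
lia.
Qed.

Lemma collisions_gt0 p s : sorted ltn s -> 0 < collisions p s ->
  exists a b, [/\ a \in s, b \in s, a < b & p %| b - a].
Proof.
elim: s => [|a s IH] //= sorted_as.
have lt_as := order_path_min ltn_trans sorted_as.
case: (posnP (count (fun b => p %| b - a) s)) => [-> /IH [|a' [b' [? ? ? ?]]] | ].
- exact: path_sorted sorted_as.
- by exists a', b'; split; rewrite // inE; apply/orP; right.
rewrite -has_count => /hasP[b b_in dvd_p] _.
by exists a, b; split; rewrite ?inE ?eqxx ?b_in ?orbT // (allP lt_as).
Qed.

Lemma prod_primes_dvdn (qs : seq nat) D : uniq qs -> all prime qs ->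
  \prod_(q <- qs | q %| D) q %| D.
Proof.
elim: qs => [|a qs IH] /=; first by rewrite big_nil dvd1n.
case/andP=> a_notin uniq_qs /andP[pr_a pr_qs]; rewrite big_cons.
case: ifP => [dvd_aD|_]; last exact: IH.
rewrite Gauss_dvd ?dvd_aD ?IH // big_seq_cond.
apply: (big_ind (coprime a)) => [|u v|q /andP[q_in _]]; first exact: coprimen1.
  by rewrite coprimeMr => -> ->.
rewrite prime_coprime // dvdn_prime2 //; last exact: allP pr_qs q q_in.
by apply: contraNneq a_notin => ->.
Qed.

Lemma prod_pow_count_dvd_le (qs : seq nat) a s n : uniq qs -> all prime qs ->
  all (ltn a) s -> all (leq^~ n) s ->
  \prod_(q <- qs) q ^ count (fun b => q %| b - a) s <= n ^ size s.
Proof.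
move=> uniq_qs pr_qs; elim: s => [|b s IH] /=.
  by rewrite big1 // => q _; rewrite expn0.
case/andP=> lt_ab lt_as /andP[le_bn le_sn]; rewrite expnS.
under eq_bigr => q _ do rewrite expnD.
rewrite big_split /= leq_mul ?IH //.
have -> : \prod_(q <- qs) q ^ (q %| b - a) = \prod_(q <- qs | q %| b - a) q.
  by rewrite [RHS]big_mkcond; apply: eq_bigr => q _; case: (q %| b - a).
apply: leq_trans (_ : b - a <= n); last lia.
by apply: dvdn_leq; [lia | exact: prod_primes_dvdn].
Qed.

(* Each collision a < b of s modulo q contributes a factor q of b - a, and
   distinct primes dividing b - a multiply to at most b - a <= n. *)
Lemma prod_pow_collisions_le (qs : seq nat) s n : uniq qs -> all prime qs ->
  sorted ltn s -> all (leq^~ n) s -> 0 < n ->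
  \prod_(q <- qs) q ^ collisions q s <= n ^ (size s * size s).
Proof.
move=> uniq_qs pr_qs; elim: s => [|a s IH] /= sorted_as.
  by rewrite big1 // => q _; rewrite expn0.
have lt_as := order_path_min ltn_trans sorted_as.
case/andP=> _ le_sn n_gt0; under eq_bigr => q _ do rewrite expnD.
rewrite big_split /=; apply: leq_trans (leq_mul
  (prod_pow_count_dvd_le uniq_qs pr_qs lt_as le_sn) (IH (path_sorted sorted_as) le_sn n_gt0)) _.
by rewrite -expnD; apply: leq_pexp2l => //; lia.
Qed.

Lemma sq_lt_exp2_ge10 t : 0 < t -> 16 * (t * t) < 2 ^ t.+1 -> 10 <= t.
Proof. by do 10![case: t => // t]. Qed.

Definition good_prime d n q := prime q && in_range d n q.
Definition bad_prime (T : eqType) (S : nat -> T) x y d n q :=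
  good_prime d n q && (16 * Delta_p S x y q <= 17 * d).

Section FewBadPrimes.
Variables (T : eqType) (S : nat -> T) (n d x y : nat).
Hypotheses (d_gt0 : 0 < d) (x_gt0 : 0 < x) (lt_xy : x < y) (le_yn : y <= n)
  (HAM_ge : 2 * d <= HAM_rev S x y).

Let t := trunc_log 2 n.
Let s := take (2 * d) (mismatches S x y).

Let trunc_log2_bounds : 2 ^ t <= n < 2 ^ t.+1.
Proof. by apply: trunc_log_bounds; lia. Qed.

Let size_s : size s = 2 * d.
Proof. by rewrite size_takel // -HAM_revE. Qed.

Let sorted_s : sorted ltn s.
Proof. exact: (subseq_sorted ltn_trans (take_subseq _ _) (sorted_mismatches S x y)). Qed.

Let mem_s i : i \in s -> x <= i <= y.
Proof. by move/mem_take/mem_mismatches. Qed.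

Lemma collisions_bad_prime q : bad_prime S x y d n q -> 15 * d <= 16 * collisions q s.
Proof.
case/andP=> /andP[pr_q _] bad_q.
have sub_s : {subset s <= mismatches S x y} by move=> i /mem_take.
have := residues_le_Delta_p (prime_gt0 pr_q) sub_s.
have := size_le_residues_collisions q sorted_s.
rewrite size_s; lia.
Qed.

Lemma trunc_log_ge10 q : bad_prime S x y d n q -> 10 <= t.
Proof.
move=> bad_q; have t_gt0 : 0 < t by rewrite trunc_log_gt0; lia.
have [a [b [/mem_s a_in /mem_s b_in lt_ab dvd_q]]] :
    exists a b, [/\ a \in s, b \in s, a < b & q %| b - a].
  by apply: collisions_gt0 sorted_s _; have := collisions_bad_prime bad_q; lia.
have /andP[_ lt_n] := trunc_log2_bounds.
have /andP[/andP[_ /(in_range_lb trunc_log2_bounds) le_q] _] := bad_q.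
have le_q_gap : q <= b - a by apply: dvdn_leq; lia.
have le_tt : t * t <= d * (t * t) by rewrite leq_pmull.
by apply: sq_lt_exp2_ge10 => //; lia.
Qed.

(* Raising both sides to the 16th power: each bad prime q >= L contributes
   q ^ (16 * collisions q s) >= L ^ (15 * d), while all collisions together
   are bounded by n ^ ((2 * d) ^ 2). *)
Lemma size_bad_primes (qs : seq nat) : uniq qs -> all (bad_prime S x y d n) qs ->
  150 * size qs <= 64 * d * t.+1.
Proof.
move=> uniq_qs /allP bad_qs; case E: qs => [//|q0 qs']; rewrite -E.
have q0_in : q0 \in qs by rewrite E mem_head.
have t_ge10 := trunc_log_ge10 (bad_qs q0 q0_in).
set L := 16 * d * (t * t).
have L_le q : q \in qs -> L <= q.
  by move/bad_qs/andP=> [/andP[_ /(in_range_lb trunc_log2_bounds)]].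
have upper : \prod_(q <- qs) q ^ collisions q s <= n ^ (2 * d * (2 * d)).
  rewrite -size_s; apply: prod_pow_collisions_le => //; last lia.
  - by apply/allP => q /bad_qs /andP[/andP[]].
  - by apply/allP => i /mem_s; lia.
have lower : L ^ (15 * d * size qs) <= (\prod_(q <- qs) q ^ collisions q s) ^ 16.
  rewrite (big_morph (expn^~ 16) (fun a b => expnMn a b 16) (exp1n 16)) /=.
  rewrite expnM -(count_predT qs) -prod_nat_const_seq !big_seq; apply: leq_prod => q q_in.
  rewrite -expnM; apply: leq_trans (leq_exp2rW _ (L_le q q_in)).
  apply: leq_pexp2l; first lia.
  by have := collisions_bad_prime (bad_qs q q_in); lia.
have : 2 ^ (10 * (15 * d * size qs)) <= 2 ^ (t.+1 * (2 * d * (2 * d)) * 16).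
  have L_ge : 2 ^ 10 <= L.
    have : 100 <= t * t by nia.
    have : t * t <= d * (t * t) by rewrite leq_pmull.
    rewrite /L; lia.
  rewrite (expnM 2 10) (expnM 2 _ 16) (expnM 2 t.+1).
  apply: leq_trans (leq_exp2rW _ L_ge) _.
  apply: leq_trans lower _; apply: leq_exp2rW; apply: leq_trans upper _.
  by apply: leq_exp2rW; have /andP[_ /ltnW] := trunc_log2_bounds.
rewrite leq_exp2l // (_ : t.+1 * (2 * d * (2 * d)) * 16 = d * (64 * d * t.+1)); last lia.
by rewrite (_ : 10 * (15 * d * size qs) = d * (150 * size qs)) ?leq_pmul2l //; lia.
Qed.

Lemma good_primes_ge : 10 <= t ->
  2 * d * t.+1 <= #|[pred q : 'I_(prime_bound d n) | good_prime d n q]|.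
Proof.
move=> t_ge10; have /andP[le_2t lt_n] := trunc_log2_bounds.
have lt_d : d < 2 ^ t.
  have : HAM_rev S x y <= y - x + 1 by rewrite /HAM_rev -[X in _ <= X](size_iota x) count_size.
  by rewrite expnS in lt_n; lia.
have le_t : t <= up_log 2 n by rewrite -(@leq_exp2l 2) // (leq_trans le_2t) ?up_logP.
rewrite card_ord_pred; apply: leq_trans (count_primes_window t_ge10 d_gt0 lt_d) _.
set A := 16 * d * (t.+1 * t.+1); rewrite /index_iota.
apply: leq_trans (count_iota_le _ (_ : A + ((24 * A).+1 - A) <= prime_bound d n)).
  rewrite (@eq_in_count _ _ (good_prime d n)) // => q; rewrite mem_iota => q_in.
  by rewrite /good_prime (in_range_window trunc_log2_bounds t_ge10) ?andbT //; lia.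
have : t * t <= up_log 2 n ^ 2 by rewrite -mulnn leq_mul.
rewrite /prime_bound /A; nia.
Qed.

Lemma card_bad_primes :
  4 * #|[pred q : 'I_(prime_bound d n) | bad_prime S x y d n q]|
  <= #|[pred q : 'I_(prime_bound d n) | good_prime d n q]|.
Proof.
set B := [pred q | _]; set qs := [seq val q | q <- enum B].
have uniq_qs : uniq qs by rewrite map_inj_uniq ?enum_uniq //; exact: val_inj.
have bad_qs : all (bad_prime S x y d n) qs.
  by apply/allP => _ /mapP[q q_in ->]; rewrite mem_enum in q_in.
have size_qs : size qs = #|B| by rewrite size_map cardE.
case: (posnP #|B|) => [-> //|/card_gt0P[q0 q0_bad]].
have := size_bad_primes uniq_qs bad_qs.
have := good_primes_ge (trunc_log_ge10 q0_bad).
rewrite size_qs; lia.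
Qed.

End FewBadPrimes.

(* With every coordinate drawn uniformly from P, all k coordinates land in B
   with probability (#|B| / #|P|) ^ k <= 1 / c. *)
Lemma card_ffun_on_notin (aT rT : finType) (P B : {pred rT}) c :
  {subset B <= P} -> c * #|B| ^ #|aT| <= #|P| ^ #|aT| ->
  (c - 1) * #|@ffun_on aT P| <= c * #|[predD ffun_on P & @ffun_on aT B]|.
Proof.
move=> sub_BP le_c.
have := cardID (@ffun_on aT B) (@ffun_on aT P).
have -> : #|[predI ffun_on P & @ffun_on aT B]| = #|@ffun_on aT B|.
  apply: eq_card => f; rewrite !inE andb_idl // => /ffun_onP B_f.
  by apply/ffun_onP => i; exact: sub_BP.
rewrite !card_ffun_on => card_P; rewrite -card_P in le_c *.
case: c le_c => [|c]; first by rewrite mul0n.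
rewrite subSS subn0 !mulSn mulnDr.
by move: (#|B| ^ _) #|[predD _ & _]| => b g; lia.
Qed.

Lemma cube_le_exp4_num_primes n : n ^ 3 <= 4 ^ num_primes n.
Proof.
case: n => // n; apply: leq_trans (_ : n.+1 ^ 4 <= _); first by rewrite leq_pexp2l.
rewrite (expnM n.+1 2 2) (_ : 4 ^ _ = (2 ^ num_primes n.+1) ^ 2).
  by apply: leq_exp2rW; exact: up_logP.
by rewrite -expnM (mulnC _ 2) expnM.
Qed.

Lemma card_valid_choices d n :
  #|[set f | valid_choice d n f]|
  = #|@ffun_on 'I_(num_primes n) [pred q : 'I_(prime_bound d n) | good_prime d n q]|.
Proof.
apply: eq_card => f; rewrite in_set; apply/forallP/ffun_onP => valid_f j.
  by have := valid_f j.
by have := valid_f j; rewrite inE.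
Qed.

Lemma card_detecting_choices (T : eqType) (S : nat -> T) x y d n :
  #|[set f | valid_choice d n f &&
             (17 * d < 16 * Delta S x y (fun j : 'I_(num_primes n) => nat_of_ord (f j)))]|
  = #|[predD @ffun_on 'I_(num_primes n) [pred q : 'I_(prime_bound d n) | good_prime d n q]
       & @ffun_on 'I_(num_primes n) [pred q : 'I_(prime_bound d n) | bad_prime S x y d n q]]|.
Proof.
apply: eq_card => f; rewrite in_set !inE andbC.
have -> : valid_choice d n f
    = [forall j, f j \in [pred q : 'I_(prime_bound d n) | good_prime d n q]] by [].
case: (boolP [forall j, _]) => [/forallP good_f|]; rewrite ?andbT ?andbF //.
rewrite ltnNge /Delta leq_mul_bigmax; congr (~~ _); apply: eq_forallb => j.
by move: (good_f j); rewrite !inE /bad_prime => ->.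
Qed.

Theorem lemma5p1 (T : eqType) (S : nat -> T) (n d x y : nat) :
  1 <= d -> 1 <= x -> x < y -> y <= n -> ~~ odd (y - x + 1) ->
  (HAM_rev S x y <= d ->
     forall f : {ffun 'I_(num_primes n) -> 'I_(prime_bound d n)},
       valid_choice d n f ->
       Delta S x y (fun j => nat_of_ord (f j)) <= d) /\
  (2 * d <= HAM_rev S x y ->
     (n ^ 3 - 1) * #|[set f | valid_choice d n f]|
     <= n ^ 3 * #|[set f | valid_choice d n f &&
                   (17 * d < 16 * Delta S x y (fun j => nat_of_ord (f j)))]|).
Proof.
move=> d_gt0 x_gt0 lt_xy le_yn _; split.
  move=> le_HAM f _; apply/bigmax_leqP => j _.
  exact: leq_trans (Delta_p_le_HAM_rev _ _ _ _) le_HAM.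
move=> HAM_ge; rewrite card_valid_choices card_detecting_choices.
apply: card_ffun_on_notin => [q|]; first by rewrite !inE => /andP[].
rewrite card_ord; apply: leq_trans (leq_mul (cube_le_exp4_num_primes n) (leqnn _)) _.
by rewrite -expnMn; apply/leq_exp2rW/card_bad_primes.
Qed.
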